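(* Let $(G,u)$ be a countable unperforated partially ordered abelian group with order unit $u$. Then $\{\tau\in S(G,u):\ker\tau=\mathrm{Inf}(G)\}$ is a dense $G_\delta$ subset of $S(G,u)$.
   Context: $u$ is an order unit: for every $g\in G$ there is $n\in\mathbb Z^+$ with $nu-g\ge0$. Unperforated: $ng\ge0$ for some $n\in\mathbb N$ implies $g\ge0$. A state is a homomorphism $\tau:G\to\mathbb R$ with $\tau(G^+)\ge0$ and $\tau(u)=1$; $S(G,u)$ is the set of states with the topology of pointwise convergence (a compact convex subset of $\mathbb R^G$). $\mathrm{Inf}(G)=\{g\in G:-\epsilon u\le g\le\epsilon u\text{ for all rational }\epsilon>0\}$. *)

From HB Require Import structures.
From mathcomp Require Import all_boot all_order all_algebra.
From mathcomp Require Import all_classical all_reals all_analysis.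
Import numFieldNormedType.Exports.
Set Implicit Arguments. Unset Strict Implicit. Unset Printing Implicit Defensive.
Import Order.TTheory GRing.Theory Num.Theory.
Local Open Scope classical_set_scope.
Local Open Scope ring_scope.

(* A partially ordered abelian group is a Z-module G with a positive cone P:
   x <= y iff y - x \in P. *)
Definition positive_cone (G : zmodType) (P : set G) : Prop :=
  [/\ P 0, (forall x y, P x -> P y -> P (x + y)) &
      (forall x, P x -> P (- x) -> x = 0)].

Definition order_unit (G : zmodType) (P : set G) (u : G) : Prop :=
  forall g : G, exists n : nat, (0 < n)%N /\ P (u *+ n - g).

Definition unperforated (G : zmodType) (P : set G) : Prop :=
  forall (g : G) (n : nat), (0 < n)%N -> P (g *+ n) -> P g.

Definition is_state (G : zmodType) (R : realType) (P : set G) (u : G)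
  (tau : G -> R) : Prop :=
  [/\ (forall x y, tau (x + y) = tau x + tau y),
      (forall g, P g -> 0 <= tau g) & tau u = 1].

Definition states (G : zmodType) (R : realType) (P : set G) (u : G)
  : set {ptws G -> R} := [set tau | is_state P u tau].

(* Inf(G): -eps u <= g <= eps u for all rational eps = p/q > 0,
   i.e. q g <= p u and -(p u) <= q g. *)
Definition Inf (G : zmodType) (P : set G) (u : G) : set G :=
  [set g | forall p q : nat, (0 < p)%N -> (0 < q)%N ->
           P (u *+ p - g *+ q) /\ P (g *+ q + u *+ p)].

Definition ker_of (G : zmodType) (R : realType) (tau : G -> R) : set G :=
  [set g | tau g = 0].

Definition dense_in (T : topologicalType) (S A : set T) : Prop :=
  A `<=` S /\
  forall O : set T, open O -> O `&` S !=set0 -> O `&` A !=set0.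

Definition Gdelta_in (T : topologicalType) (S A : set T) : Prop :=
  exists2 F : (set T)^nat, (forall i, open (F i)) & A = S `&` \bigcap_i F i.

From HB Require Import structures.
From mathcomp Require Import all_boot all_order all_algebra.
From mathcomp Require Import all_classical all_reals all_analysis.
From mathcomp Require Import ring lra.
Import numFieldNormedType.Exports.
Import Order.TTheory GRing.Theory Num.Theory.
Local Open Scope classical_set_scope.
Local Open Scope ring_scope.
Set Implicit Arguments. Unset Strict Implicit. Unset Printing Implicit Defensive.

(* A state vanishes on Inf(G), since there |tau g| <= eps for every rational eps > 0.
   Hence the states with kernel Inf(G) are those avoiding the zero set of tau g for
   each g outside Inf(G): as G is countable, a countable intersection of open sets
   of the pointwise topology.
   For density, unperforation and the extension of relative states (adjoining the
   elements of G one at a time, each time at the infimum of the admissible values)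
   give, for every g outside Inf(G), a state s with s g <> 0; moving a state slightly
   toward s makes it nonzero at g.  Doing this for the elements of G one after the
   other, each move smaller than the margins secured so far, the states converge
   pointwise to a state with kernel exactly Inf(G), as close as wanted to the
   starting one. *)

Lemma dependent_choice_nat (T : Type) (Q : nat -> T -> Prop) (S : nat -> T -> T -> Prop)
    (x0 : T) :
  Q 0 x0 -> (forall n x, Q n x -> exists2 y, Q n.+1 y & S n x y) ->
  exists x : nat -> T, x 0 = x0 /\ forall n, Q n (x n) /\ S n (x n) (x n.+1).
Proof.
move=> Qx0 hS.
pose next n (p : {x | Q n x}) : {y | Q n.+1 y & S n (sval p) y} :=
  cid2 (hS n _ (svalP p)).
pose fix seq n : {x | Q n x} := match n with
  | 0 => exist _ x0 Qx0
  | n.+1 => let: exist2 y Qy _ := next n (seq n) in exist _ y Qy end.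
exists (fun n => sval (seq n)); split => // n; split; first exact: svalP.
by rewrite /=; case: (next n (seq n)).
Qed.

Section BoundedVariation.
Variables (R : realType) (x D : R ^nat) (c : R).
Hypotheses (c_ge0 : 0 <= c) (D_ge0 : forall k, 0 <= D k)
  (D_nonincr : forall k, D k.+1 <= D k)
  (x_step : forall k, `|x k.+1 - x k| <= c * (D k - D k.+1)).

Lemma variation_dist_le k j : (k <= j)%N -> `|x j - x k| <= c * (D k - D j).
Proof.
move=> /subnK <-; elim: (j - k)%N => [|n IH]; first by rewrite add0n !subrr normr0 mulr0.
rewrite addSn; apply: le_trans (ler_distD (x (n + k)) _ _) _.
by have := x_step (n + k); move: IH; rewrite !mulrBr; lra.
Qed.

Lemma variation_cvgn : cvgn x.
Proof.
have nonincr_cvgn (v : R ^nat) b : (forall k, v k.+1 <= v k) -> (forall k, b <= v k) ->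
    cvgn v.
  move=> vS vb; apply: cvgP; apply: nonincreasing_cvgn; last by exists b => _ [k _ <-].
  by apply/nonincreasing_seqP.
have -> : x = (fun k => (x k + c * D k) - c * D k) by apply/funext => k; ring.
apply: is_cvgB.
- apply: (@nonincr_cvgn _ (x 0 - c * D 0)) => k.
    by have := x_step k; rewrite ler_norml mulrBr => /andP[_]; lra.
  have := variation_dist_le (leq0n k); rewrite ler_norml mulrBr => /andP[+ _].
  have := mulr_ge0 c_ge0 (D_ge0 k); lra.
- apply: (@nonincr_cvgn _ 0) => k; last exact: mulr_ge0.
  exact: ler_wpM2l.
Qed.

Lemma variation_limn_dist_le k : `|limn x - x k| <= c * D k.
Proof.
have cD j : 0 <= c * D j by exact: mulr_ge0.
rewrite ler_norml; apply/andP; split.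
- rewrite lerBrDr; apply: limr_ge; first exact: variation_cvgn.
  near=> j; have /variation_dist_le : (k <= j)%N by near: j; exact: nbhs_infty_ge.
  by rewrite ler_norml mulrBr => /andP[+ _]; have := cD j; lra.
- rewrite lerBlDr; apply: limr_le; first exact: variation_cvgn.
  near=> j; have /variation_dist_le : (k <= j)%N by near: j; exact: nbhs_infty_ge.
  by rewrite ler_norml mulrBr => /andP[_ +]; have := cD j; lra.
Unshelve. all: by end_near.
Qed.

End BoundedVariation.

Lemma natmul_le1_eq0 (R : archiNumFieldType) (x : R) :
  (forall n, (0 < n)%N -> `|x| *+ n <= 1) -> x = 0.
Proof.
move=> hx; apply/eqP; apply: contraT; rewrite -normr_gt0 => x_gt0.
have inv_ge0 : 0 <= `|x|^-1 by rewrite invr_ge0 ltW.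
have := archi_boundP inv_ge0; set N := Num.bound _ => hN.
have N_gt0 : (0 < N)%N by rewrite -(ltr0n R); apply: lt_trans hN; rewrite invr_gt0.
rewrite -(ltr_pM2l (x := `|x|)) // mulfV ?gt_eqF // mulr_natr in hN.
by move: (hx N N_gt0) => /(lt_le_trans hN); rewrite ltxx.
Qed.

Lemma exists_mix_neq0 (R : realFieldType) (a b e : R) : b != 0 -> 0 < e ->
  exists w, [/\ 0 < w, w <= e & (1 - w) * a + w * b != 0].
Proof.
move=> b0 e_gt0; have [e1|ne1] := eqVneq ((1 - e / 2) * a + e / 2 * b) 0; last first.
  by exists (e / 2); split => //; [apply: divr_gt0 | lra].
exists e; split => //; apply/eqP => e2; have /eqP : e / 2 * (b - a) = 0.
  have -> : e / 2 * (b - a) = (1 - e) * a + e * b - ((1 - e / 2) * a + e / 2 * b).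
    by field.
  by rewrite e1 e2 subrr.
rewrite mulf_eq0 subr_eq0 => /orP[/eqP|/eqP ba]; first lra.
by move: e1 b0; rewrite ba -mulrDl subrK mul1r => ->; rewrite eqxx.
Qed.

Lemma open_ptws_or_neq0 (T : eqType) (R : realType) (Q : Prop) (g : T) :
  open [set f : {ptws T -> R} | Q \/ f g != 0].
Proof.
have [q|nq] := pselect Q.
  have -> : [set f : {ptws T -> R} | Q \/ f g != 0] = setT.
    by apply/seteqP; split => // f _; left.
  exact: openT.
have -> : [set f : {ptws T -> R} | Q \/ f g != 0] =
    (fun f : {ptws T -> R} => f g) @^-1` [set r | r != 0].
  by apply/seteqP; split => f /=; [case | right].
by apply: (continuousP _).1 (@open_neq R 0); exact: (@proj_continuous T (fun=> R) g).
Qed.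

Lemma ptws_cvg_eval (I T : Type) (V : topologicalType) (F : set_system T)
    (h : T -> {ptws I -> V}) (f : {ptws I -> V}) :
  Filter F -> (forall i, (fun x => h x i) @ F --> f i) -> h @ F --> f.
Proof.
move=> FF hF; apply/cvg_sup => i A; rewrite nbhsE => -[_ [[C oC <-] Cf] CA].
by apply: filterS CA _; apply: hF; exact: open_nbhs_nbhs.
Qed.

Section SubgroupAdditive.
Variables (G V : zmodType).

Definition subgroup (H : set G) := H 0 /\ forall x y, H x -> H y -> H (x - y).

Definition additive_on (H : set G) (f : G -> V) :=
  forall x y, H x -> H y -> f (x + y) = f x + f y.

Variables (H : set G) (f : G -> V) (hH : subgroup H) (fD : additive_on H f).

Lemma subgroup0 : H 0. Proof. by case: hH. Qed.

Lemma subgroupB x y : H x -> H y -> H (x - y). Proof. by case: hH => _; apply. Qed.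

Lemma subgroupN x : H x -> H (- x).
Proof. by rewrite -sub0r; apply/subgroupB/subgroup0. Qed.

Lemma subgroupD x y : H x -> H y -> H (x + y).
Proof. by move=> Hx Hy; rewrite -[y]opprK; apply/subgroupB/subgroupN. Qed.

Lemma subgroupMn x n : H x -> H (x *+ n).
Proof.
move=> Hx; elim: n => [|n IH]; first by rewrite mulr0n; apply: subgroup0.
by rewrite mulrSr; apply: subgroupD.
Qed.

Lemma additive_on0 : f 0 = 0.
Proof.
have := fD subgroup0 subgroup0; rewrite addr0.
by move=> /(congr1 (fun z => z - f 0)); rewrite subrr addrK.
Qed.

Lemma additive_onN x : H x -> f (- x) = - f x.
Proof.
move=> Hx; have := fD Hx (subgroupN Hx); rewrite subrr additive_on0.
by move=> /(congr1 (fun z => - f x + z)); rewrite addr0 addKr.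
Qed.

Lemma additive_onB x y : H x -> H y -> f (x - y) = f x - f y.
Proof. by move=> Hx Hy; rewrite fD ?additive_onN //; apply: subgroupN. Qed.

Lemma additive_onMn x n : H x -> f (x *+ n) = f x *+ n.
Proof.
move=> Hx; elim: n => [|n IH]; first by rewrite !mulr0n additive_on0.
by rewrite !mulrSr fD ?IH //; apply: subgroupMn.
Qed.

End SubgroupAdditive.

Section RelativeStates.
Variables (G : zmodType) (R : realType) (P : set G) (u : G).
Hypotheses (hP : positive_cone P) (hu : order_unit P u) (hun : unperforated P).

Lemma cone0 : P 0. Proof. by case: hP. Qed.

Lemma coneD x y : P x -> P y -> P (x + y). Proof. by case: hP => _ + _; apply. Qed.

Lemma coneMn x n : P x -> P (x *+ n).
Proof.
move=> Px; elim: n => [|n IH]; first by rewrite mulr0n; exact: cone0.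
by rewrite mulrSr; exact: coneD.
Qed.

Lemma order_unit_ge0 : P u.
Proof.
have [n [_ h]] := hu (- u); rewrite opprK in h.
by apply: (@hun u n.+1) => //; rewrite mulrSr.
Qed.

Definition relative_state (H : set G) (f : G -> R) :=
  [/\ subgroup H, H u, additive_on H f, (forall x, H x -> P x -> 0 <= f x) & f u = 1].

Section OneStepExtension.
Variables (H : set G) (f : G -> R) (x : G).
Hypothesis hf : relative_state H f.

Let hH : subgroup H. Proof. by case: hf. Qed.
Let fD : additive_on H f. Proof. by case: hf. Qed.
Let Hu : H u. Proof. by case: hf. Qed.
Let f_ge0 : forall y, H y -> P y -> 0 <= f y. Proof. by case: hf. Qed.

Definition upper_ratios :=
  [set r | exists h n, [/\ H h, (0 < n)%N, P (h - x *+ n) & r = f h / n%:R]].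
Definition lower_ratios :=
  [set r | exists h n, [/\ H h, (0 < n)%N, P (x *+ n - h) & r = f h / n%:R]].

Lemma lower_le_upper r s : lower_ratios r -> upper_ratios s -> r <= s.
Proof.
move=> [h [n [Hh n0 Ph ->]]] [h' [m [Hh' m0 Ph' ->]]].
have Pd : P (h' *+ n - h *+ m).
  have -> : h' *+ n - h *+ m = (h' - x *+ m) *+ n + (x *+ n - h) *+ m.
    by rewrite !mulrnBl -!mulrnA mulnC addrA addrNK.
  by apply: coneD; apply: coneMn.
have Hn := subgroupMn hH n Hh'; have Hm := subgroupMn hH m Hh.
have := f_ge0 (subgroupB hH Hn Hm) Pd.
rewrite (additive_onB hH fD Hn Hm) (additive_onMn hH fD n Hh') (additive_onMn hH fD m Hh).
rewrite subr_ge0 => hnm.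
by rewrite ler_pdivrMr ?ltr0n // mulrAC ler_pdivlMr ?ltr0n // !mulr_natr.
Qed.

Lemma upper_ratios_neq0 : upper_ratios !=set0.
Proof.
have [n [_ h]] := hu x.
by exists (f (u *+ n) / 1%:R), (u *+ n), 1%N; split => //; apply: subgroupMn.
Qed.

Lemma lower_ratios_neq0 : lower_ratios !=set0.
Proof.
have [n [_ h]] := hu (- x); rewrite opprK addrC in h.
exists (f (- (u *+ n)) / 1%:R), (- (u *+ n)), 1%N.
by split; rewrite ?mulr1n ?opprK //; apply: subgroupN => //; apply: subgroupMn.
Qed.

(* Any value of [f x] between the lower and the upper ratios extends [f] positively
   to [H + Z x]; we take the infimum of the upper ones. *)
Definition extension_slope := inf upper_ratios.

Lemma lower_le_slope r : lower_ratios r -> r <= extension_slope.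
Proof. by move=> Lr; apply: lb_le_inf upper_ratios_neq0 _ => s; apply: lower_le_upper. Qed.

Lemma slope_le_upper s : upper_ratios s -> extension_slope <= s.
Proof.
move=> Us; apply: ge_inf => //; have [r Lr] := lower_ratios_neq0.
by exists r => t; apply: lower_le_upper.
Qed.

(* [f (x *+ n) / n] is at once an upper and a lower ratio. *)
Lemma relative_state_Mz k : H (x *~ k) -> f (x *~ k) = k%:~R * extension_slope.
Proof.
have fxMn n : H (x *+ n.+1) -> f (x *+ n.+1) = n.+1%:R * extension_slope.
  move=> Hn; have Pn : P (x *+ n.+1 - x *+ n.+1) by rewrite subrr; exact: cone0.
  have ratioE : f (x *+ n.+1) / n.+1%:R = extension_slope.
    by apply/eqP; rewrite eq_le slope_le_upper ?lower_le_slope //; exists (x *+ n.+1), n.+1.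
  by rewrite -ratioE mulrC divfK.
case: k => [[|n]|n] Hk; first by rewrite mulr0z mul0r (additive_on0 hH fD).
  by rewrite fxMn // -pmulrn.
rewrite NegzE mulrNz in Hk *.
have Hn : H (x *+ n.+1) by rewrite -[x *+ n.+1]opprK; apply: subgroupN.
by rewrite (additive_onN hH fD Hn) fxMn // mulrNz mulNr.
Qed.

Definition extended_domain := [set y | exists h k, H h /\ y = h + x *~ k].

Definition extended_state (y : G) : R := xget 0
  [set r | exists h k, [/\ H h, y = h + x *~ k & r = f h + k%:~R * extension_slope]].

Lemma extended_stateE h k :
  H h -> extended_state (h + x *~ k) = f h + k%:~R * extension_slope.
Proof.
move=> Hh; rewrite /extended_state; set S := (X in xget 0 X).
have /(xgetI 0) [h' [k' [Hh' e ->]]] : S (f h + k%:~R * extension_slope) by exists h, k.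
have ediff : h' - h = x *~ (k - k').
  by apply/(addIr (x *~ k')); rewrite addrAC -e addrAC subrr add0r -mulrzDr subrK.
have := @relative_state_Mz (k - k'); rewrite -ediff (additive_onB hH fD Hh' Hh).
by move=> /(_ (subgroupB hH Hh' Hh)); rewrite intrB; lra.
Qed.

Lemma extended_state_ge0 y : extended_domain y -> P y -> 0 <= extended_state y.
Proof.
move=> [h [k [Hh ->]]]; rewrite extended_stateE //.
case: k => [[|n]|n] Py.
- by rewrite mulr0z addr0 in Py; rewrite mul0r addr0; exact: f_ge0.
- have /lower_le_slope : lower_ratios (f (- h) / n.+1%:R).
    exists (- h), n.+1; split; rewrite ?opprK 1?addrC -?pmulrn //.
    exact: (subgroupN hH).
  rewrite (additive_onN hH fD Hh) ler_pdivrMr ?ltr0n // => hc; rewrite -pmulrn; lra.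
- rewrite NegzE mulrNz -pmulrn in Py.
  have /slope_le_upper : upper_ratios (f h / n.+1%:R) by exists h, n.+1.
  rewrite ler_pdivlMr ?ltr0n // => hc; rewrite NegzE mulrNz -pmulrn mulNr; lra.
Qed.

Lemma extended_state_restrict y : H y -> extended_state y = f y.
Proof. by move=> Hy; have := extended_stateE 0 Hy; rewrite !mulr0z mul0r !addr0. Qed.

Lemma relative_state_extended : relative_state extended_domain extended_state.
Proof.
split.
- split; first by exists 0, 0; rewrite mulr0z addr0; split => //; exact: (subgroup0 hH).
  move=> _ _ [h [k [Hh ->]]] [h' [k' [Hh' ->]]]; exists (h - h'), (k - k').
  by split; [exact: (subgroupB hH) | rewrite mulrzBr opprD addrACA].
- by exists u, 0; rewrite mulr0z addr0.
- move=> _ _ [h [k [Hh ->]]] [h' [k' [Hh' ->]]].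
  have Hhh' := subgroupD hH Hh Hh'.
  by rewrite addrACA -mulrzDr !extended_stateE // fD // intrD; lra.
- exact: extended_state_ge0.
- by rewrite extended_state_restrict //; case: hf.
Qed.

Lemma extended_domain_sub : H `<=` extended_domain.
Proof. by move=> y Hy; exists y, 0; rewrite mulr0z addr0. Qed.

Lemma extended_domain_x : extended_domain x.
Proof. by exists 0, 1; rewrite add0r; split => //; exact: (subgroup0 hH). Qed.

Lemma extended_state_x : extended_state x = extension_slope.
Proof.
have := extended_stateE 1 (subgroup0 hH).
by rewrite add0r !mulr1z mul1r (additive_on0 hH fD) add0r.
Qed.

End OneStepExtension.

Lemma order_unit_bound g : exists n : nat, P (u *+ n - g) /\ P (u *+ n + g).
Proof.
have [n1 [_ h1]] := hu g; have [n2 [_ h2]] := hu (- g); rewrite opprK in h2.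
have Pu := order_unit_ge0.
exists (n1 + n2)%N; split.
- by rewrite mulrnDr addrAC; apply: coneD => //; exact: coneMn.
- by rewrite addnC mulrnDr addrAC; apply: coneD => //; exact: coneMn.
Qed.

Definition state_bound g : R := (projT1 (cid (order_unit_bound g)))%:R.

Lemma state_bound_ge0 g : 0 <= state_bound g. Proof. exact: ler0n. Qed.

Definition unit_multiples := [set x | exists k : int, x = u *~ k].

Section States.
Variables (t : G -> R) (ht : is_state P u t).

Let tD : additive_on setT t. Proof. by case: ht => D _ _ x y _ _; apply: D. Qed.
Let hT : subgroup (@setT G). Proof. by []. Qed.

Lemma stateD x y : t (x + y) = t x + t y. Proof. exact: tD. Qed.
Lemma stateN x : t (- x) = - t x. Proof. exact: (additive_onN hT tD). Qed.
Lemma stateB x y : t (x - y) = t x - t y. Proof. exact: (additive_onB hT tD). Qed.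
Lemma stateMn x n : t (x *+ n) = t x *+ n. Proof. exact: (additive_onMn hT tD). Qed.
Lemma state_ge0 x : P x -> 0 <= t x. Proof. by case: ht => _ + _; apply. Qed.
Lemma state_unit : t u = 1. Proof. by case: ht. Qed.

Lemma state_unitMz k : t (u *~ k) = k%:~R.
Proof.
by case: k => n; rewrite ?NegzE ?mulrNz ?stateN -pmulrn stateMn state_unit.
Qed.

Lemma state_relative_unit_multiples : relative_state unit_multiples t.
Proof.
split.
- split; first by exists 0; rewrite mulr0z.
  by move=> _ _ [k ->] [k' ->]; exists (k - k'); rewrite mulrzBr.
- by exists 1; rewrite mulr1z.
- by move=> x y _ _; apply: stateD.
- by move=> x _; apply: state_ge0.
- exact: state_unit.
Qed.

Lemma state_Inf_eq0 g : Inf P u g -> t g = 0.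
Proof.
move=> hI; apply: natmul_le1_eq0 => n n_gt0; have [h1 h2] := hI 1%N n isT n_gt0.
move: (state_ge0 h1) (state_ge0 h2); rewrite stateB stateD !stateMn state_unit.
by rewrite -normrMn ler_norml => ? ?; apply/andP; split; lra.
Qed.

Lemma norm_state_le g : `|t g| <= state_bound g.
Proof.
rewrite /state_bound; case: cid => n /= [h1 h2].
move: (state_ge0 h1) (state_ge0 h2); rewrite stateB stateD stateMn state_unit.
by rewrite ler_norml => ? ?; apply/andP; split; lra.
Qed.

Lemma state_mix s w : is_state P u s -> 0 <= w -> w <= 1 ->
  is_state P u (fun g => (1 - w) * t g + w * s g).
Proof.
case=> sD s_ge0 s_unit w_ge0 w_le1; split.
- by move=> x y; rewrite stateD sD; ring.
- move=> g Pg; apply: addr_ge0; apply: mulr_ge0; rewrite ?subr_ge0 //.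
    exact: state_ge0.
  exact: s_ge0.
- by rewrite state_unit s_unit; ring.
Qed.

End States.

Lemma norm_state_mix_sub t s w g : is_state P u t -> is_state P u s -> 0 <= w ->
  `|(1 - w) * t g + w * s g - t g| <= 2 * state_bound g * w.
Proof.
move=> ht hs w_ge0.
have -> : (1 - w) * t g + w * s g - t g = w * (s g - t g) by ring.
rewrite normrM ger0_norm // mulrC ler_wpM2r //.
have := norm_state_le ht g; have := norm_state_le hs g.
by have := ler_normB (s g) (t g); lra.
Qed.

Lemma state_limn (M : nat -> G -> R) :
  (forall k, is_state P u (M k)) -> (forall g, cvgn (fun k => M k g)) ->
  is_state P u (fun g => limn (fun k => M k g)).
Proof.
move=> hM cvgM; split.
- move=> x y; have -> : (fun k => M k (x + y)) = (fun k => M k x + M k y).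
    by apply/funext => k; apply: stateD.
  by rewrite limD.
- by move=> g Pg; apply: limr_ge => //; apply: nearW => k; exact: state_ge0.
- have -> : (fun k => M k u) = (fun=> 1) by apply/funext => k; apply: state_unit.
  exact: lim_cst.
Qed.

End RelativeStates.

Section CountableGroup.
Variables (G : countZmodType) (R : realType) (P : set G) (u : G).
Hypotheses (hP : positive_cone P) (hu : order_unit P u) (hun : unperforated P).

Definition enum_elt (n : nat) : G := odflt 0 (unpickle n).

Lemma enum_eltK g : enum_elt (pickle g) = g. Proof. by rewrite /enum_elt pickleK. Qed.

Section ChainLimit.
Variable c : nat -> set G * (G -> R).
Hypotheses (c_rel : forall n, relative_state P u (c n).1 (c n).2)
  (c_sub : forall n, (c n).1 `<=` (c n.+1).1)
  (c_enum : forall n, (c n.+1).1 (enum_elt n))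
  (c_ext : forall n y, (c n).1 y -> (c n.+1).2 y = (c n).2 y).

Definition chain_limit g := (c (pickle g).+1).2 g.

Lemma chain_mono m n y : (m <= n)%N -> (c m).1 y -> (c n).1 y /\ (c n).2 y = (c m).2 y.
Proof.
move=> /subnK <-; elim: (n - m)%N => [|k IH] // cy.
by have [ck <-] := IH cy; rewrite addSn; split; [apply: c_sub | apply: c_ext].
Qed.

Lemma chain_limitE g n : ((pickle g).+1 <= n)%N -> (c n).1 g /\ chain_limit g = (c n).2 g.
Proof.
move=> le_gn; have := c_enum (pickle g); rewrite enum_eltK => cg.
by have [? ->] := chain_mono le_gn cg.
Qed.

Lemma chain_limit_state : is_state P u chain_limit.
Proof.
split.
- move=> x y; pose n := (maxn (pickle x) (maxn (pickle y) (pickle (x + y)))).+1.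
  have [cx ->] : (c n).1 x /\ chain_limit x = (c n).2 x.
    by apply: chain_limitE; rewrite ltnS leq_maxl.
  have [cy ->] : (c n).1 y /\ chain_limit y = (c n).2 y.
    by apply: chain_limitE; rewrite ltnS !leq_max leqnn orbT.
  have [_ ->] : (c n).1 (x + y) /\ chain_limit (x + y) = (c n).2 (x + y).
    by apply: chain_limitE; rewrite ltnS !leq_max leqnn !orbT.
  by case: (c_rel n) => _ _ + _ _; apply.
- move=> g Pg; have [cg ->] := @chain_limitE g _ (leqnn _).
  by case: (c_rel (pickle g).+1) => _ _ _ + _; apply.
- have [_ ->] := @chain_limitE u _ (leqnn _).
  by case: (c_rel (pickle u).+1).
Qed.

Lemma chain_limit_extends y : (c 0).1 y -> chain_limit y = (c 0).2 y.
Proof.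
move=> cy; have [_ ->] := @chain_limitE y _ (leqnn _).
by have [_ ->] := chain_mono (leq0n (pickle y).+1) cy.
Qed.

End ChainLimit.

Lemma relative_state_extends H f : relative_state P u H f ->
  exists2 s : G -> R, is_state P u s & forall y, H y -> s y = f y.
Proof.
move=> hf.
pose extends_at n (p q : set G * (G -> R)) := [/\ p.1 `<=` q.1, q.1 (enum_elt n)
  & forall y, p.1 y -> q.2 y = p.2 y].
have [c [c0 hc]] : exists c : nat -> set G * (G -> R), c 0 = (H, f) /\ forall n,
    relative_state P u (c n).1 (c n).2 /\ extends_at n (c n) (c n.+1).
  apply: (@dependent_choice_nat _ (fun _ p => relative_state P u p.1 p.2)) => //.
  move=> n [H' f'] hf'.
  exists (extended_domain H' (enum_elt n), extended_state P H' f' (enum_elt n)).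
    exact: (relative_state_extended hP hu).
  split; [exact: extended_domain_sub | exact: (extended_domain_x _ hf') |].
  by move=> y; apply: (extended_state_restrict hP hu _ hf').
have c_sub n : (c n).1 `<=` (c n.+1).1 by have [_ []] := hc n.
have c_enum n : (c n.+1).1 (enum_elt n) by have [_ []] := hc n.
have c_ext n y : (c n).1 y -> (c n.+1).2 y = (c n).2 y by have [_ []] := hc n; auto.
exists (chain_limit c).
  by apply: chain_limit_state => // n; have [? []] := hc n.
by move=> y Hy; rewrite (chain_limit_extends c_sub c_enum c_ext) c0.
Qed.

Lemma exists_state_ge (t : G -> R) y a : is_state P u t -> (0 < a)%N -> ~ P (u *+ a - y) ->
  exists2 s : G -> R, is_state P u s & a%:R <= s y.
Proof.
move=> ht a_gt0 nPy; have hZ := state_relative_unit_multiples ht.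
have [s hs es] := relative_state_extends (relative_state_extended hP hu y hZ).
exists s => //; rewrite es; last exact: (extended_domain_x _ hZ).
rewrite (extended_state_x hP hu _ hZ).
apply: lb_le_inf (upper_ratios_neq0 hu _ hZ) _ => _ [h [n [[k ->] n_gt0 Pkn ->]]].
rewrite (state_unitMz ht) ler_pdivlMr ?ltr0n // leNgt; apply/negP => lt_k_an.
have [m em] : exists m : nat, (a * n)%N%:Z = k + m%:Z.
  exists `|(a * n)%N%:Z - k|%N; rewrite gez0_abs ?subrKC // subr_ge0 ltW //.
  by rewrite -(ltr_int R) -pmulrn natrM.
(* n (a u - y) = (k u - n y) + m u, and unperforation divides out n. *)
apply/nPy/(hun n_gt0); have -> : (u *+ a - y) *+ n = (u *~ k - y *+ n) + u *+ m.
  rewrite mulrnBl -mulrnA [u *+ (a * n)]pmulrn em mulrzDr -[u *~ m]pmulrn.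
  by rewrite addrAC.
by apply: (coneD hP) => //; apply: (coneMn hP); exact: (order_unit_ge0 hu hun).
Qed.

Lemma exists_state_neq0 (t : G -> R) g : is_state P u t -> ~ Inf P u g ->
  exists2 s : G -> R, is_state P u s & s g != 0.
Proof.
move=> ht nIg.
have [p [q [p_gt0 q_gt0 npq]]] : exists p q, [/\ (0 < p)%N, (0 < q)%N &
    ~ (P (u *+ p - g *+ q) /\ P (g *+ q + u *+ p))].
  apply: contrapT => hne; apply: nIg => p q p_gt0 q_gt0.
  by apply: contrapT => npq; apply: hne; exists p, q.
have [y nPy ey] : exists2 y, ~ P (u *+ p - y) & y = g *+ q \/ y = - (g *+ q).
  have [Pp|nPp] := pselect (P (u *+ p - g *+ q)); last by exists (g *+ q); [|left].
  by exists (- (g *+ q)); [rewrite opprK addrC => Pm; apply: npq | right].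
have [s hs le_ps] := exists_state_ge ht p_gt0 nPy.
exists s => //; apply/eqP => sg0.
have sy0 : s y = 0 by case: ey => ->; rewrite ?(stateN hs) (stateMn hs) sg0 mul0rn ?oppr0.
by move: le_ps; rewrite sy0 lern0 -leqn0 leqNgt p_gt0.
Qed.

Let B := state_bound R hP hu hun.

(* Later steps move the value at [g] by at most [2 * B g] times the decrease of [D],
   so the margin [2 * B g * D] keeps [g] out of the kernel of the limit. *)
Definition separates k (M : G -> R) (D : R) :=
  [/\ is_state P u M, 0 < D & forall i, (i < k)%N -> ~ Inf P u (enum_elt i) ->
      2 * B (enum_elt i) * D < `|M (enum_elt i)|].

Definition refines (p p' : (G -> R) * R) :=
  p'.2 <= p.2 /\ forall g, `|p'.1 g - p.1 g| <= 2 * B g * (p.2 - p'.2).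

Lemma separates_step k M D : separates k M D ->
  exists2 p', separates k.+1 p'.1 p'.2 & refines (M, D) p'.
Proof.
case=> hM D_gt0 sepM; set h := enum_elt k.
have [Ih|nIh] := pselect (Inf P u h).
  exists (M, D); last by split => //= g; rewrite !subrr normr0 mulr0.
  by split => // i; rewrite ltnS leq_eqVlt => /orP[/eqP -> //|]; exact: sepM.
have [s hs sh0] := exists_state_neq0 hM nIh.
have e_gt0 : 0 < Num.min (D / 2) 1 by rewrite lt_min ltr01 andbT divr_gt0.
have [w [w_gt0 w_le mix_neq0]] := exists_mix_neq0 (M h) sh0 e_gt0.
have [w_le_D w_le1] : w <= D / 2 /\ w <= 1 by move: w_le; rewrite le_min => /andP.
pose M' g := (1 - w) * M g + w * s g.
have hM' : is_state P u M' by apply: state_mix => //; exact: ltW.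
have dM g : `|M' g - M g| <= 2 * B g * w by apply: norm_state_mix_sub => //; exact: ltW.
have B_ge0 g : 0 <= B g by exact: state_bound_ge0.
pose q := `|M' h| / (2 * B h + 1).
have q_gt0 : 0 < q by apply: divr_gt0; rewrite ?normr_gt0 //; have := B_ge0 h; lra.
have Bq : 2 * B h * q < `|M' h|.
  have : q * (2 * B h + 1) = `|M' h| by rewrite divfK //; have := B_ge0 h; lra.
  by have := B_ge0 h; nra.
pose D' := Num.min (D - w) q.
have D'_le : D' <= D - w by rewrite ge_min lexx.
exists (M', D').
  split => //=; first by rewrite lt_min q_gt0 andbT; lra.
  move=> i; rewrite ltnS leq_eqVlt => /orP[/eqP -> _|lt_ik nIi].
    by apply: le_lt_trans Bq; rewrite ler_wpM2l ?ge_min ?lexx ?orbT //; have := B_ge0 h; lra.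
  have := sepM i lt_ik nIi; have := dM (enum_elt i).
  have : 2 * B (enum_elt i) * D' <= 2 * B (enum_elt i) * (D - w).
    by rewrite ler_wpM2l //; have := B_ge0 (enum_elt i); lra.
  by have := lerB_dist (M (enum_elt i)) (M' (enum_elt i)); rewrite distrC; lra.
split => /= [|g]; first lra.
apply: le_trans (dM g) _; rewrite ler_wpM2l //; last lra.
by have := B_ge0 g; lra.
Qed.

Lemma exists_state_ker_Inf_near t d : is_state P u t -> 0 < d ->
  exists2 nu : G -> R, is_state P u nu /\ ker_of nu = Inf P u &
    forall g, `|nu g - t g| <= 2 * B g * d.
Proof.
move=> ht d_gt0; have sep0 : separates 0 t d by split.
have [x [x0 hx]] : exists x : nat -> (G -> R) * R, x 0 = (t, d) /\
    forall k, separates k (x k).1 (x k).2 /\ refines (x k) (x k.+1).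
  apply: (@dependent_choice_nat _ (fun k p => separates k p.1 p.2) (fun=> refines)) => //.
  by move=> k [M D]; exact: separates_step.
have sepx k : separates k (x k).1 (x k).2 by case: (hx k).
have D_nonincr k : (x k.+1).2 <= (x k).2 by case: (hx k) => _ [].
have var_x g k : `|(x k.+1).1 g - (x k).1 g| <= 2 * B g * ((x k).2 - (x k.+1).2).
  by case: (hx k) => _ [_]; apply.
have D_ge0 k : 0 <= (x k).2 by case: (sepx k) => _ /ltW.
have c_ge0 g : 0 <= 2 * B g by rewrite mulr_ge0 ?state_bound_ge0.
pose nu g := limn (fun k => (x k).1 g).
have nu_near g k : `|nu g - (x k).1 g| <= 2 * B g * (x k).2.
  exact: (variation_limn_dist_le (c_ge0 g) D_ge0 D_nonincr (var_x g)).
have nu_state : is_state P u nu.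
  apply: state_limn => [k|g]; first by case: (sepx k).
  exact: (variation_cvgn (c_ge0 g) D_ge0 D_nonincr (var_x g)).
exists nu; last by move=> g; have := nu_near g 0; rewrite x0.
split => //; apply/seteqP; split => g; last exact: state_Inf_eq0.
(* the (pickle g).+1-th approximation already keeps [g] away from the kernel *)
rewrite /ker_of /= => nug0; apply: contrapT => nIg.
have [_ _ /(_ (pickle g) (ltnSn _))] := sepx (pickle g).+1.
rewrite enum_eltK => /(_ nIg); have := nu_near g (pickle g).+1.
by rewrite nug0 sub0r normrN; lra.
Qed.

Lemma states_ker_Inf_dense :
  dense_in (@states G R P u) [set tau | @states G R P u tau /\ ker_of tau = Inf P u].
Proof.
split; first by move=> tau [].
move=> O oO [t [Ot St]].
have /choice [nu hnu] : forall n : nat, exists nu : G -> R,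
    (is_state P u nu /\ ker_of nu = Inf P u) /\
    forall g, `|nu g - t g| <= 2 * B g * n.+1%:R^-1.
  move=> n; have inv_gt0 : 0 < n.+1%:R^-1 :> R by rewrite invr_gt0.
  by have [nu ? ?] := exists_state_ker_Inf_near St inv_gt0; exists nu.
have nu_cvg : (nu : nat -> {ptws G -> R}) @ \oo --> (t : {ptws G -> R}).
  apply: ptws_cvg_eval => g; apply/cvgrPdist_le => e e_gt0.
  near=> n; rewrite distrC; apply: le_trans ((hnu n).2 g) _.
  have : 2 * B g / e < n%:R by near: n; exact: nbhs_infty_gtr.
  by rewrite ltr_pdivrMr // ler_pdivrMr ?ltr0n // -addn1 natrD; lra.
have [N _ /(_ N (leqnn N)) ON] : \forall n \near \oo, O (nu n).
  by apply: nu_cvg; exact: open_nbhs_nbhs.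
by exists (nu N); split => //; case: (hnu N).
Unshelve. all: by end_near.
Qed.

Lemma states_ker_Inf_Gdelta :
  Gdelta_in (@states G R P u) [set tau | @states G R P u tau /\ ker_of tau = Inf P u].
Proof.
exists (fun i => [set f : {ptws G -> R} | Inf P u (enum_elt i) \/ f (enum_elt i) != 0]).
  by move=> i; apply: open_ptws_or_neq0.
apply/seteqP; split=> f [Sf kf]; split => //.
  move=> i _ /=; have [Ii|nIi] := pselect (Inf P u (enum_elt i)); [by left | right].
  by apply/eqP => f0; apply: nIi; rewrite -kf.
apply/seteqP; split => g; last exact: state_Inf_eq0.
rewrite /ker_of /= => fg0; apply: contrapT => nIg.
by have /= := kf (pickle g) I; rewrite enum_eltK fg0 eqxx => -[].
Qed.

End CountableGroup.

Theorem mainTheorem9 (G : countZmodType) (R : realType) (P : set G) (u : G) :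
  positive_cone P -> order_unit P u -> unperforated P ->
  let A := [set tau : {ptws G -> R} | @states G R P u tau /\ ker_of tau = Inf P u] in
  @dense_in {ptws G -> R} (@states G R P u) A /\ @Gdelta_in {ptws G -> R} (@states G R P u) A.
Proof.
move=> hP hu hun A; split.
- exact: states_ker_Inf_dense.
- exact: states_ker_Inf_Gdelta.
Qed.
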